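(* Let $p_0,p_1,\dots$ be a special sequence in $C([-1,1])$ and for $i\ge1$ let $g_i(t)=\int_0^t[1+p_i(s)]\,ds$ for $t\in[-1,1]$. If $R$ is a tournament on $[n]$ and $\varepsilon>0$, then there exists $(f_1,\dots,f_n)\in\mathcal G_0^n$ such that (1) $\|f_i-g_i\|<\varepsilon$ (sup norm) for $i\in[n]$; (2) for $i\in[n]$ and $t\in[-1,1]$, $1/3<f_i'(t)<3$; (3) for distinct $i,j\in[n]$, $f_j\circ f_i^{-1}\in\mathcal G_+$ if and only if $(i,j)\in R$.
   Context: $\mathcal G$ is the group of strictly increasing continuous maps $f:[-1,1]\to[-1,1]$ with $f(\pm1)=\pm1$; $\mathcal G_0=\{f\in\mathcal G:\int_{-1}^1f=0\}$, $\mathcal G_+=\{f\in\mathcal G:\int_{-1}^1f>0\}$. A tournament on $[n]$ is $R\subset[n]\times[n]$ with no diagonal pairs and exactly one of $(i,j),(j,i)$ for each distinct $i,j$. A special sequence is a sequence $p_0,p_1,\dots$ of nonzero continuously differentiable functions on $[-1,1]$ such that: every $p_i$ is even and $p_0=1$; $\int_{-1}^1p_i(t)p_j(t)\,dt=0$ for $i\ne j$; $\sup_t|p_i(t)|\le\tfrac12$ for $i>0$; and $p_i(\pm1)=0$ for $i>0$. *)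

From Stdlib Require Import Reals Lra ClassicalEpsilon.
From Coquelicot Require Import Coquelicot.
Open Scope R_scope.

Definition I11 (x : R) : Prop := -1 <= x <= 1.

Definition cont_I (f : R -> R) (x : R) : Prop :=
  filterlim f (within I11 (locally x)) (locally (f x)).

Definition deriv_I (f : R -> R) (x l : R) : Prop :=
  filterlim (fun y => (f y - f x) / (y - x))
    (within (fun y => I11 y /\ y <> x) (locally x)) (locally l).

Definition C1_I (f : R -> R) : Prop :=
  exists df : R -> R,
    (forall x, I11 x -> deriv_I f x (df x)) /\ (forall x, I11 x -> cont_I df x).

Definition in_G (f : R -> R) : Prop :=
  (forall x, I11 x -> I11 (f x)) /\
  (forall x y, I11 x -> I11 y -> x < y -> f x < f y) /\
  (forall x, I11 x -> cont_I f x) /\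
  f (-1) = -1 /\ f 1 = 1.

Definition in_G0 (f : R -> R) : Prop := in_G f /\ RInt f (-1) 1 = 0.
Definition in_Gplus (f : R -> R) : Prop := in_G f /\ RInt f (-1) 1 > 0.

(* Inverse of f on [-1,1] (meaningful for f in G, where it is unique). *)
Definition inv_I (f : R -> R) (y : R) : R :=
  epsilon (inhabits 0) (fun x => I11 x /\ f x = y).

Definition special_seq (p : nat -> R -> R) : Prop :=
  (forall i, C1_I (p i)) /\
  (forall i, exists t, I11 t /\ p i t <> 0) /\
  (forall i t, I11 t -> p i (- t) = p i t) /\
  (forall t, I11 t -> p 0%nat t = 1) /\
  (forall i j, i <> j -> RInt (fun t => p i t * p j t) (-1) 1 = 0) /\
  (forall i, (0 < i)%nat -> exists M, M <= 1/2 /\ forall t, I11 t -> Rabs (p i t) <= M) /\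
  (forall i, (0 < i)%nat -> p i (-1) = 0 /\ p i 1 = 0).

Definition in_n (n i : nat) : Prop := (1 <= i <= n)%nat.

Definition tournament (n : nat) (Rel : nat -> nat -> Prop) : Prop :=
  (forall i j, Rel i j -> in_n n i /\ in_n n j) /\
  (forall i, ~ Rel i i) /\
  (forall i j, in_n n i -> in_n n j -> i <> j ->
     (Rel i j \/ Rel j i) /\ ~ (Rel i j /\ Rel j i)).

From Stdlib Require Import Reals Lra Lia ClassicalEpsilon.
From Coquelicot Require Import Coquelicot.
Open Scope R_scope.

(* Perturb [g_i] along the [p_k]: [f_i = g_i + delta * Q_i] with
   [Q_i = - sum_{(i,k) in R} p_k / |p_k|^2].  As [f_i] is an increasing C^1 bijection of
   [-1,1], substituting [t = f_i s] gives [int f_j o f_i^-1 = int f_j * f_i'].  Expanded in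
   [delta], the term [int g_j * g_i'] vanishes since the integrand is odd; by an integration by
   parts and the orthogonality of the [p_k] (also to [p_0 = 1]) the first-order term is
   [delta * ([(i,j) in R] - [(j,i) in R])]; the rest is [O(delta^2)].  So for small [delta]
   the sign of [int f_j o f_i^-1] is dictated by [R], while [|f_i - g_i| = O(delta)] and
   [f_i' = 1 + p_i + delta * Q_i'] stays in (1/3, 3) because [|p_i| <= 1/2]. *)

Definition cont_R (f : R -> R) : Prop := forall x, continuous f x.

Lemma cont_R_const c : cont_R (fun _ => c).
Proof. intros x. apply continuous_const. Qed.

Lemma cont_R_plus f g : cont_R f -> cont_R g -> cont_R (fun t => f t + g t).
Proof. intros Hf Hg x. exact (continuous_plus f g x (Hf x) (Hg x)). Qed.

Lemma cont_R_minus f g : cont_R f -> cont_R g -> cont_R (fun t => f t - g t).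
Proof. intros Hf Hg x. exact (continuous_minus f g x (Hf x) (Hg x)). Qed.

Lemma cont_R_mult f g : cont_R f -> cont_R g -> cont_R (fun t => f t * g t).
Proof. intros Hf Hg x. exact (continuous_mult f g x (Hf x) (Hg x)). Qed.

Lemma ex_RInt_cont_R f a b : cont_R f -> ex_RInt f a b.
Proof. intros H. apply (@ex_RInt_continuous R_CompleteNormedModule). intros; apply H. Qed.

Lemma is_derive_RInt_cont_R f a x : cont_R f -> is_derive (fun t => RInt f a t) x (f x).
Proof.
  intros H. apply (is_derive_RInt f _ a x); [|apply H].
  apply filter_forall. intros y. apply (@RInt_correct R_CompleteNormedModule), ex_RInt_cont_R, H.
Qed.

Lemma cont_R_RInt f a : cont_R f -> cont_R (fun t => RInt f a t).
Proof.
  intros H x. apply (@ex_derive_continuous R_AbsRing R_NormedModule). eexists. apply is_derive_RInt_cont_R, H.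
Qed.

#[local] Hint Resolve cont_R_const cont_R_plus cont_R_minus cont_R_mult
  ex_RInt_cont_R cont_R_RInt : cont.

Lemma RInt_plus_cont_R f g a b : cont_R f -> cont_R g ->
  RInt (fun t => f t + g t) a b = RInt f a b + RInt g a b.
Proof. intros Hf Hg. apply (@RInt_plus R_CompleteNormedModule); auto with cont. Qed.

Lemma RInt_scal_cont_R f a b c : cont_R f -> RInt (fun t => c * f t) a b = c * RInt f a b.
Proof. intros Hf. apply (@RInt_scal R_CompleteNormedModule); auto with cont. Qed.

Lemma continuous_epsilon_delta (f : R -> R) x : continuous f x <->
  forall e, 0 < e -> exists d, 0 < d /\ forall y, Rabs (y - x) < d -> Rabs (f y - f x) < e.
Proof.
  split.
  - intros H e He. destruct (proj1 (filterlim_locally f (f x)) H (mkposreal e He)) as [d Hd].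
    exists d; split; [apply cond_pos|]. intros y Hy. apply (Hd y Hy).
  - intros H. apply filterlim_locally. intros e.
    destruct (H e (cond_pos e)) as [d [Hd H']]. exists (mkposreal d Hd). exact H'.
Qed.

Lemma cont_I_epsilon_delta (f : R -> R) x : cont_I f x <->
  forall e, 0 < e -> exists d, 0 < d /\
    forall y, I11 y -> Rabs (y - x) < d -> Rabs (f y - f x) < e.
Proof.
  split.
  - intros H e He. destruct (proj1 (filterlim_locally f (f x)) H (mkposreal e He)) as [d Hd].
    exists d; split; [apply cond_pos|]. intros y Iy Hy. apply (Hd y Hy Iy).
  - intros H. apply filterlim_locally. intros e.
    destruct (H e (cond_pos e)) as [d [Hd H']]. exists (mkposreal d Hd).
    intros y Hy Iy. apply H'; [exact Iy | exact Hy].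
Qed.

Lemma deriv_I_epsilon_delta (f : R -> R) x l : deriv_I f x l <->
  forall e, 0 < e -> exists d, 0 < d /\ forall y, I11 y -> y <> x -> Rabs (y - x) < d ->
    Rabs ((f y - f x) / (y - x) - l) < e.
Proof.
  split.
  - intros H e He. destruct (proj1 (filterlim_locally _ l) H (mkposreal e He)) as [d Hd].
    exists d; split; [apply cond_pos|]. intros y Iy Ny Hy. apply (Hd y Hy (conj Iy Ny)).
  - intros H. apply filterlim_locally. intros e.
    destruct (H e (cond_pos e)) as [d [Hd H']]. exists (mkposreal d Hd).
    intros y Hy [Iy Ny]. apply H'; [exact Iy | exact Ny | exact Hy].
Qed.

Lemma cont_R_cont_I f x : cont_R f -> cont_I f x.
Proof. intros H. apply (filterlim_filter_le_1 _ (filter_le_within _) (H x)). Qed.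

Lemma cont_I_comp (g u : R -> R) x : (forall y, I11 y -> I11 (u y)) ->
  cont_I g (u x) -> cont_I u x -> cont_I (fun t => g (u t)) x.
Proof.
  intros Hu_I Hg Hu. apply cont_I_epsilon_delta. intros e He.
  destruct (proj1 (cont_I_epsilon_delta g (u x)) Hg e He) as [d1 [Hd1 H1]].
  destruct (proj1 (cont_I_epsilon_delta u x) Hu d1 Hd1) as [d [Hd H]].
  exists d; split; [exact Hd|]. intros y Iy Hy. apply H1; auto.
Qed.

(* Functions given on [-1,1] are extended to R by precomposing with [clamp],
   so that Coquelicot's continuity and integration lemmas apply to them. *)
Definition clamp (t : R) : R := Rmax (-1) (Rmin 1 t).

Lemma clamp_I11 t : I11 (clamp t).
Proof. unfold clamp, I11, Rmax, Rmin. repeat destruct Rle_dec; lra. Qed.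

Lemma clamp_id t : I11 t -> clamp t = t.
Proof. unfold clamp, I11, Rmax, Rmin. intros. repeat destruct Rle_dec; lra. Qed.

Lemma clamp_idem t : clamp (clamp t) = clamp t.
Proof. apply clamp_id, clamp_I11. Qed.

Lemma clamp_opp t : clamp (- t) = - clamp t.
Proof. unfold clamp, Rmax, Rmin. repeat destruct Rle_dec; lra. Qed.

Lemma clamp_1_lipschitz x y : Rabs (clamp y - clamp x) <= Rabs (y - x).
Proof.
  unfold clamp, Rmax, Rmin. repeat destruct Rle_dec; unfold Rabs; repeat destruct Rcase_abs; lra.
Qed.

Lemma cont_R_clamp (u : R -> R) : (forall x, I11 x -> cont_I u x) ->
  cont_R (fun t => u (clamp t)).
Proof.
  intros H x. apply continuous_epsilon_delta. intros e He.
  destruct (proj1 (cont_I_epsilon_delta u (clamp x)) (H _ (clamp_I11 x)) e He) as [d [Hd H']].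
  exists d; split; [exact Hd|]. intros y Hy. apply H'; [apply clamp_I11|].
  eapply Rle_lt_trans; [apply clamp_1_lipschitz | exact Hy].
Qed.

Lemma cont_R_clamp_bounded (h : R -> R) : cont_R h ->
  exists B, forall t, Rabs (h (clamp t)) <= B.
Proof.
  intros H.
  destruct (continuity_ab_maj (fun t => Rabs (h t)) (-1) 1) as [tmax [Hmax _]]; [lra| |].
  - intros t _. apply continuity_pt_filterlim, continuous_Rabs_comp, H.
  - exists (Rabs (h tmax)). intros t. apply Hmax, clamp_I11.
Qed.

Lemma deriv_I_cont_I (f : R -> R) x l : deriv_I f x l -> cont_I f x.
Proof.
  intros H. apply cont_I_epsilon_delta. intros e He.
  destruct (proj1 (deriv_I_epsilon_delta f x l) H 1 Rlt_0_1) as [d [Hd H']].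
  set (K := Rabs l + 1). assert (HK : 0 < K) by (pose proof (Rabs_pos l); unfold K; lra).
  exists (Rmin d (e / K)). split; [apply Rmin_pos; [exact Hd | apply Rdiv_lt_0_compat; lra]|].
  intros y Iy Hy. destruct (Req_dec y x) as [->|Ny].
  { unfold Rminus. rewrite Rplus_opp_r, Rabs_R0. exact He. }
  assert (Hq : Rabs ((f y - f x) / (y - x)) <= K).
  { assert (A := H' y Iy Ny (Rlt_le_trans _ _ _ Hy (Rmin_l _ _))).
    replace ((f y - f x) / (y - x)) with (((f y - f x) / (y - x) - l) + l) by ring.
    eapply Rle_trans; [apply Rabs_triang|]. unfold K; lra. }
  assert (Hyx : Rabs (y - x) < e / K) by (eapply Rlt_le_trans; [exact Hy | apply Rmin_r]).
  replace (f y - f x) with ((f y - f x) / (y - x) * (y - x)) by (field; lra).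
  rewrite Rabs_mult. pose proof (Rabs_pos (y - x)).
  apply Rle_lt_trans with (K * Rabs (y - x)); [apply Rmult_le_compat_r; lra|].
  replace e with (K * (e / K)) by (field; lra). apply Rmult_lt_compat_l; lra.
Qed.

Lemma deriv_I_ext (u v : R -> R) x l : (forall y, I11 y -> u y = v y) -> I11 x ->
  deriv_I u x l -> deriv_I v x l.
Proof.
  intros E Ix. unfold deriv_I. apply filterlim_within_ext. intros y [Iy _]. rewrite (E y Iy), (E x Ix). reflexivity.
Qed.

Lemma deriv_I_const c x : deriv_I (fun _ => c) x 0.
Proof.
  unfold deriv_I. apply (filterlim_within_ext _ (fun _ => 0)); [|apply filterlim_const].
  intros y [_ Ny]. field. lra.
Qed.

Lemma deriv_I_plus (u v : R -> R) x a b : deriv_I u x a -> deriv_I v x b ->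
  deriv_I (fun t => u t + v t) x (a + b).
Proof.
  intros Hu Hv. unfold deriv_I. apply (filterlim_within_ext _ (fun y => (u y - u x) / (y - x) + (v y - v x) / (y - x))).
  - intros y [_ Ny]. field. lra.
  - eapply filterlim_comp_2; [exact Hu | exact Hv | apply (filterlim_plus a b)].
Qed.

Lemma deriv_I_scal (u : R -> R) x a c : deriv_I u x a ->
  deriv_I (fun t => c * u t) x (c * a).
Proof.
  intros Hu. unfold deriv_I. apply (filterlim_within_ext _ (fun y => c * ((u y - u x) / (y - x)))).
  - intros y [_ Ny]. field. lra.
  - eapply filterlim_comp; [exact Hu | apply (filterlim_scal_r c a)].
Qed.

Lemma is_derive_deriv_I (f : R -> R) x l : is_derive f x l -> deriv_I f x l.
Proof.
  intros H. apply is_derive_Reals in H. apply deriv_I_epsilon_delta. intros e He.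
  destruct (H e He) as [d Hd]. exists d; split; [apply cond_pos|].
  intros y _ Ny Hy. specialize (Hd (y - x) ltac:(lra) Hy).
  replace (x + (y - x)) with y in Hd by ring. exact Hd.
Qed.

Lemma deriv_I_is_derive (f : R -> R) x l : -1 < x < 1 -> deriv_I f x l -> is_derive f x l.
Proof.
  intros Ix H. apply is_derive_Reals. intros e He.
  destruct (proj1 (deriv_I_epsilon_delta f x l) H e He) as [d [Hd H']].
  assert (Hd' : 0 < Rmin d (Rmin (1 - x) (x + 1))) by (repeat apply Rmin_pos; lra).
  exists (mkposreal _ Hd'). intros h Nh Hh. simpl in Hh.
  assert (h1 := Rlt_le_trans _ _ _ Hh (Rmin_l _ _)).
  assert (h2 := Rlt_le_trans _ _ _ Hh (Rmin_r _ _)).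
  assert (h3 := Rlt_le_trans _ _ _ h2 (Rmin_l _ _)).
  assert (h4 := Rlt_le_trans _ _ _ h2 (Rmin_r _ _)).
  specialize (H' (x + h)). replace (x + h - x) with h in H' by ring.
  apply H'; [|lra|exact h1]. apply Rabs_def2 in h3, h4. unfold I11. lra.
Qed.

Lemma RInt_derive_interior (F f : R -> R) a b : a <= b ->
  (forall x, a <= x <= b -> continuous F x) ->
  (forall x, a < x < b -> is_derive F x (f x)) -> cont_R f ->
  RInt f a b = F b - F a.
Proof.
  intros Hab HF HD Hf.
  destruct (MVT_gen (fun s => F s - RInt f a s) a b (fun _ => 0)) as [c [_ Hc]].
  - intros x Hx. rewrite Rmin_left, Rmax_right in Hx by lra.
    replace 0 with (minus (f x) (f x)) by (unfold minus, plus, opp; simpl; ring).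
    apply (is_derive_minus F (fun s => RInt f a s)); [apply HD, Hx | apply is_derive_RInt_cont_R, Hf].
  - intros x Hx. rewrite Rmin_left, Rmax_right in Hx by lra.
    apply continuity_pt_minus; apply continuity_pt_filterlim; [apply HF, Hx | apply cont_R_RInt, Hf].
  - rewrite RInt_point in Hc. unfold zero in Hc; simpl in Hc. lra.
Qed.

Lemma RInt_product_rule (u v du dv : R -> R) a b : a <= b ->
  cont_R u -> cont_R v -> cont_R du -> cont_R dv ->
  (forall x, a < x < b -> is_derive u x (du x)) ->
  (forall x, a < x < b -> is_derive v x (dv x)) ->
  RInt (fun s => du s * v s + u s * dv s) a b = u b * v b - u a * v a.
Proof.
  intros Hab Hu Hv Hdu Hdv Du Dv.
  apply (RInt_derive_interior (fun s => u s * v s)); [exact Hab | | | auto with cont].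
  - intros x _. apply cont_R_mult; assumption.
  - intros x Hx. apply (is_derive_mult u v); auto. intros; apply Rmult_comm.
Qed.

Lemma RInt_odd (u : R -> R) : cont_R u -> (forall x, u (- x) = - u x) ->
  RInt u (-1) 1 = 0.
Proof.
  intros Hc Hodd.
  assert (E := RInt_comp_lin u (-1) 0 (-1) 1 (ex_RInt_cont_R _ _ _ Hc)).
  rewrite (RInt_ext _ u) in E.
  2:{ intros x _. unfold scal; simpl; unfold mult; simpl.
      replace (-1 * x + 0) with (- x) by ring. rewrite Hodd. ring. }
  replace (-1 * -1 + 0) with 1 in E by ring. replace (-1 * 1 + 0) with (-1) in E by ring.
  rewrite <- (opp_RInt_swap u (-1) 1) in E by (apply ex_RInt_cont_R, Hc).
  unfold opp in E; simpl in E. lra.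
Qed.

Lemma RInt_0_opp_even (w : R -> R) t : cont_R w -> (forall x, w (- x) = w x) ->
  RInt w 0 (- t) = - RInt w 0 t.
Proof.
  intros Hc Heven.
  assert (E := RInt_comp_lin w (-1) 0 0 t (ex_RInt_cont_R _ _ _ Hc)).
  rewrite (RInt_ext _ (fun y => opp (w y))) in E.
  2:{ intros x _. unfold scal; simpl; unfold mult; simpl.
      replace (-1 * x + 0) with (- x) by ring. rewrite Heven. unfold opp; simpl. ring. }
  rewrite (@RInt_opp R_CompleteNormedModule) in E by (apply ex_RInt_cont_R, Hc).
  replace (-1 * 0 + 0) with 0 in E by ring. replace (-1 * t + 0) with (- t) in E by ring.
  rewrite <- E. reflexivity.
Qed.

Lemma RInt_pos_of_pos_point (g : R -> R) a b t0 : a < b -> cont_R g ->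
  (forall x, a <= x <= b -> 0 <= g x) -> a <= t0 <= b -> 0 < g t0 -> 0 < RInt g a b.
Proof.
  intros Hab Hc Hnn Ht0 Hg0.
  destruct (proj1 (continuous_epsilon_delta g t0) (Hc t0) (g t0) Hg0) as [d [Hd Hnear]].
  set (u := Rmax a (t0 - d / 2)). set (v := Rmin b (t0 + d / 2)).
  assert (Hu : a <= u <= t0 /\ t0 - d / 2 <= u) by (unfold u, Rmax; destruct Rle_dec; repeat split; lra).
  assert (Hv : t0 <= v <= b /\ v <= t0 + d / 2) by (unfold v, Rmin; destruct Rle_dec; repeat split; lra).
  assert (Huv : u < v) by (unfold u, v, Rmax, Rmin; repeat destruct Rle_dec; lra).
  rewrite <- (RInt_Chasles g a u b), <- (RInt_Chasles g u v b) by (apply ex_RInt_cont_R, Hc).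
  unfold plus; simpl.
  assert (0 <= RInt g a u) by (apply RInt_ge_0; [lra | auto with cont | intros; apply Hnn; lra]).
  assert (0 <= RInt g v b) by (apply RInt_ge_0; [lra | auto with cont | intros; apply Hnn; lra]).
  assert (0 < RInt g u v).
  { apply RInt_gt_0; [exact Huv | | intros; apply Hc].
    intros x Hx. assert (K : Rabs (g x - g t0) < g t0) by (apply Hnear, Rabs_def1; lra).
    apply Rabs_def2 in K. lra. }
  lra.
Qed.

Section InverseOnI.

Variable phi : R -> R.
Hypothesis phi_G : in_G phi.

Lemma in_G_lt_iff x y : I11 x -> I11 y -> (phi x < phi y <-> x < y).
Proof.
  destruct phi_G as (_ & Hincr & _). intros Ix Iy. split; [|apply Hincr; assumption].
  intros Hlt. destruct (Rtotal_order x y) as [H|[H|H]]; [exact H| |]; subst.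
  - lra.
  - specialize (Hincr y x Iy Ix H). lra.
Qed.

Lemma inv_I_spec y : I11 y -> I11 (inv_I phi y) /\ phi (inv_I phi y) = y.
Proof.
  intros Iy. unfold inv_I. apply epsilon_spec.
  destruct phi_G as (_ & _ & Hcont & Hm1 & Hp1).
  assert (Hc : continuity (fun t => phi (clamp t))).
  { intros x. apply continuity_pt_filterlim, cont_R_clamp, Hcont. }
  destruct (IVT_gen _ (-1) 1 y Hc) as [x [Hx Ex]].
  { rewrite !clamp_id, Hm1, Hp1, Rmin_left, Rmax_right by (unfold I11; lra). exact Iy. }
  rewrite Rmin_left, Rmax_right in Hx by lra.
  exists x. rewrite clamp_id in Ex by exact Hx. split; assumption.
Qed.

Lemma inv_I_l x : I11 x -> inv_I phi (phi x) = x.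
Proof.
  intros Ix. destruct phi_G as (Hmaps & _).
  destruct (inv_I_spec (phi x) (Hmaps x Ix)) as [Iy Ey].
  destruct (Rtotal_order (inv_I phi (phi x)) x) as [H|[H|H]]; [|exact H|];
    apply in_G_lt_iff in H; auto; lra.
Qed.

Lemma inv_I_incr y1 y2 : I11 y1 -> I11 y2 -> y1 < y2 -> inv_I phi y1 < inv_I phi y2.
Proof.
  intros I1 I2 Hlt. destruct (inv_I_spec y1 I1) as [J1 E1]. destruct (inv_I_spec y2 I2) as [J2 E2].
  apply in_G_lt_iff; auto. rewrite E1, E2. exact Hlt.
Qed.

Lemma cont_I_inv_I y0 : I11 y0 -> cont_I (inv_I phi) y0.
Proof.
  intros Iy0. apply cont_I_epsilon_delta. intros e He.
  destruct (inv_I_spec y0 Iy0) as [Ix0 E0]. set (x0 := inv_I phi y0) in *.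
  assert (Hup : exists d, 0 < d /\ forall y, I11 y -> y < y0 + d -> inv_I phi y < x0 + e).
  { set (b := Rmin 1 (x0 + e / 2)).
    assert (Ib : I11 b /\ x0 <= b <= x0 + e / 2)
      by (unfold b, Rmin, I11 in *; destruct Rle_dec; repeat split; lra).
    destruct (Rlt_le_dec x0 b) as [Hb|Hb].
    - exists (phi b - y0). split.
      + assert (phi x0 < phi b) by (apply in_G_lt_iff; tauto). lra.
      + intros y Iy Hy. destruct (inv_I_spec y Iy) as [Ix Ex].
        assert (inv_I phi y < b) by (apply in_G_lt_iff; try tauto; lra). lra.
    - exists 1. split; [lra|]. intros y Iy _. destruct (inv_I_spec y Iy) as [Ix _].
      assert (b = 1) by (unfold b, Rmin in *; destruct Rle_dec; lra).
      unfold I11 in Ix. lra. }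
  assert (Hdown : exists d, 0 < d /\ forall y, I11 y -> y0 - d < y -> x0 - e < inv_I phi y).
  { set (a := Rmax (-1) (x0 - e / 2)).
    assert (Ia : I11 a /\ x0 - e / 2 <= a <= x0)
      by (unfold a, Rmax, I11 in *; destruct Rle_dec; repeat split; lra).
    destruct (Rlt_le_dec a x0) as [Ha|Ha].
    - exists (y0 - phi a). split.
      + assert (phi a < phi x0) by (apply in_G_lt_iff; tauto). lra.
      + intros y Iy Hy. destruct (inv_I_spec y Iy) as [Ix Ex].
        assert (a < inv_I phi y) by (apply in_G_lt_iff; try tauto; lra). lra.
    - exists 1. split; [lra|]. intros y Iy _. destruct (inv_I_spec y Iy) as [Ix _].
      assert (a = -1) by (unfold a, Rmax in *; destruct Rle_dec; lra).
      unfold I11 in Ix. lra. }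
  destruct Hup as [d1 [Hd1 Hup]]. destruct Hdown as [d2 [Hd2 Hdown]].
  exists (Rmin d1 d2). split; [apply Rmin_pos; assumption|].
  intros y Iy Hy. apply Rabs_def2 in Hy. pose proof (Rmin_l d1 d2). pose proof (Rmin_r d1 d2).
  specialize (Hup y Iy ltac:(lra)). specialize (Hdown y Iy ltac:(lra)).
  apply Rabs_def1; lra.
Qed.

Lemma in_G_comp_inv_I h : in_G h -> in_G (fun t => h (inv_I phi t)).
Proof.
  intros (h_maps & h_incr & h_cont & h_m1 & h_p1).
  destruct phi_G as (_ & _ & _ & phi_m1 & phi_p1).
  assert (inv_maps : forall y, I11 y -> I11 (inv_I phi y)) by (intros y Iy; apply inv_I_spec, Iy).
  refine (conj _ (conj _ (conj _ (conj _ _)))).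
  - intros y Iy. apply h_maps, inv_maps, Iy.
  - intros y1 y2 I1 I2 Hlt. apply h_incr; auto. apply inv_I_incr; auto.
  - intros y Iy. apply cont_I_comp; [exact inv_maps | apply h_cont, inv_maps, Iy | apply cont_I_inv_I, Iy].
  - rewrite <- phi_m1, inv_I_l by (unfold I11; lra). rewrite phi_m1. exact h_m1.
  - rewrite <- phi_p1, inv_I_l by (unfold I11; lra). rewrite phi_p1. exact h_p1.
Qed.

Lemma RInt_comp_inv_I (h dphi : R -> R) : cont_R phi -> cont_R h -> cont_R dphi ->
  (forall x, -1 < x < 1 -> is_derive phi x (dphi x)) ->
  RInt (fun t => h (inv_I phi t)) (-1) 1 = RInt (fun s => h s * dphi s) (-1) 1.
Proof.
  intros phi_cont h_cont dphi_cont phi_deriv.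
  destruct phi_G as (phi_maps & _ & _ & phi_m1 & phi_p1).
  set (H := fun t => h (inv_I phi (clamp t))).
  assert (H_cont : cont_R H).
  { apply (cont_R_clamp (fun t => h (inv_I phi t))). intros y Iy.
    apply cont_I_comp; [intros; apply inv_I_spec; auto | apply cont_R_cont_I, h_cont | apply cont_I_inv_I, Iy]. }
  transitivity (RInt H (-1) 1).
  { apply RInt_ext. intros x Hx. rewrite Rmin_left, Rmax_right in Hx by lra.
    unfold H. rewrite clamp_id by (unfold I11; lra). reflexivity. }
  rewrite (RInt_derive_interior (fun s => RInt H (-1) (phi s)) (fun s => h s * dphi s));
    [| lra | | | auto with cont].
  - rewrite phi_m1, phi_p1, RInt_point. unfold zero; simpl. symmetry; apply Rminus_0_r.
  - intros x _. apply (continuous_comp phi (fun y => RInt H (-1) y)); [apply phi_cont | apply cont_R_RInt, H_cont].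
  - intros x Hx.
    assert (D := is_derive_comp (fun y => RInt H (-1) y) phi x _ _
                   (is_derive_RInt_cont_R H (-1) (phi x) H_cont) (phi_deriv x Hx)).
    assert (Ix : I11 x) by (unfold I11; lra).
    unfold H in D at 2. rewrite clamp_id, inv_I_l in D by auto.
    unfold scal in D; simpl in D; unfold mult in D; simpl in D.
    rewrite Rmult_comm. exact D.
Qed.

End InverseOnI.

Fixpoint sum1 (m : nat) (F : nat -> R) : R :=
  match m with O => 0 | S m' => sum1 m' F + F (S m') end.

Lemma sum1_ext m F G : (forall k, (1 <= k <= m)%nat -> F k = G k) -> sum1 m F = sum1 m G.
Proof.
  induction m as [|m IH]; simpl; intros H; [reflexivity|].
  rewrite IH, H; [reflexivity | lia |]. intros; apply H; lia.
Qed.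

Lemma sum1_zero m F : (forall k, (1 <= k <= m)%nat -> F k = 0) -> sum1 m F = 0.
Proof.
  induction m as [|m IH]; simpl; intros H; [reflexivity|].
  rewrite IH, H; [ring | lia |]. intros; apply H; lia.
Qed.

Lemma sum1_single m F j : (1 <= j <= m)%nat ->
  (forall k, (1 <= k <= m)%nat -> k <> j -> F k = 0) -> sum1 m F = F j.
Proof.
  induction m as [|m IH]; simpl; intros Hj H; [lia|].
  destruct (Nat.eq_dec j (S m)) as [->|Nj].
  - rewrite sum1_zero; [ring|]. intros k Hk. apply H; lia.
  - rewrite IH, (H (S m)); [ring | lia | lia | lia |]. intros; apply H; lia.
Qed.

Lemma sum1_mult_r m F a : sum1 m F * a = sum1 m (fun k => F k * a).
Proof. induction m as [|m IH]; simpl; [ring|]. rewrite <- IH. ring. Qed.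

Lemma sum1_abs_le m F B : (forall k, (1 <= k <= m)%nat -> Rabs (F k) <= B k) ->
  Rabs (sum1 m F) <= sum1 m B.
Proof.
  induction m as [|m IH]; simpl; intros H.
  - rewrite Rabs_R0. lra.
  - eapply Rle_trans; [apply Rabs_triang|]. apply Rplus_le_compat.
    + apply IH. intros; apply H; lia.
    + apply H; lia.
Qed.

Lemma cont_R_sum1 m (F : nat -> R -> R) : (forall k, cont_R (F k)) ->
  cont_R (fun t => sum1 m (fun k => F k t)).
Proof. intros H. induction m as [|m IH]; simpl; auto with cont. Qed.

Lemma RInt_sum1 m (F : nat -> R -> R) a b : (forall k, cont_R (F k)) ->
  RInt (fun t => sum1 m (fun k => F k t)) a b = sum1 m (fun k => RInt (F k) a b).
Proof.
  intros H. induction m as [|m IH]; simpl.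
  - rewrite RInt_const. unfold scal; simpl; unfold mult; simpl. ring.
  - rewrite RInt_plus_cont_R by (try apply cont_R_sum1; auto). rewrite IH. reflexivity.
Qed.

Lemma deriv_I_sum1 m (F : nat -> R -> R) dF x :
  (forall k, (1 <= k <= m)%nat -> deriv_I (F k) x (dF k)) ->
  deriv_I (fun t => sum1 m (fun k => F k t)) x (sum1 m dF).
Proof.
  induction m as [|m IH]; simpl; intros H.
  - apply deriv_I_const.
  - apply deriv_I_plus; [apply IH; intros; apply H; lia | apply H; lia].
Qed.

Section Construction.

Variable p : nat -> R -> R.
Hypothesis p_special : special_seq p.

Definition dp (k : nat) : R -> R :=
  proj1_sig (constructive_indefinite_description _ (proj1 p_special k)).

Lemma dp_spec k :
  (forall x, I11 x -> deriv_I (p k) x (dp k x)) /\ (forall x, I11 x -> cont_I (dp k) x).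
Proof. unfold dp. destruct constructive_indefinite_description as [d Hd]. exact Hd. Qed.

Definition P k t := p k (clamp t).
Definition D k t := dp k (clamp t).
Definition N k := RInt (fun t => P k t * P k t) (-1) 1.

Lemma cont_R_P k : cont_R (P k).
Proof. apply cont_R_clamp. intros x Ix. eapply deriv_I_cont_I, dp_spec, Ix. Qed.

Lemma cont_R_D k : cont_R (D k).
Proof. apply cont_R_clamp, dp_spec. Qed.

#[local] Hint Resolve cont_R_P cont_R_D : cont.

Lemma P_on_I k t : I11 t -> P k t = p k t.
Proof. intros It. unfold P. rewrite clamp_id by exact It. reflexivity. Qed.

Lemma P_even k t : P k (- t) = P k t.
Proof.
  destruct p_special as (_ & _ & p_even & _). unfold P. rewrite clamp_opp. apply p_even, clamp_I11.
Qed.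

Lemma Rabs_P_le k t : (0 < k)%nat -> Rabs (P k t) <= 1 / 2.
Proof.
  intros Hk. destruct p_special as (_ & _ & _ & _ & _ & p_bound & _).
  destruct (p_bound k Hk) as [M [HM Hle]]. eapply Rle_trans; [apply Hle, clamp_I11 | exact HM].
Qed.

Lemma P_ends k : (0 < k)%nat -> P k (-1) = 0 /\ P k 1 = 0.
Proof.
  intros Hk. destruct p_special as (_ & _ & _ & _ & _ & _ & p_ends).
  rewrite !P_on_I by (unfold I11; lra). apply p_ends, Hk.
Qed.

Lemma deriv_I_P k x : I11 x -> deriv_I (P k) x (D k x).
Proof.
  intros Ix. unfold D. rewrite clamp_id by exact Ix.
  apply (deriv_I_ext (p k)); [| exact Ix | apply dp_spec, Ix].
  intros y Iy. symmetry. apply P_on_I, Iy.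
Qed.

Lemma RInt_P_mul_P j k : j <> k -> RInt (fun t => P j t * P k t) (-1) 1 = 0.
Proof.
  intros Hjk. destruct p_special as (_ & _ & _ & _ & p_orth & _).
  rewrite <- (p_orth j k Hjk). apply RInt_ext. intros x Hx.
  rewrite Rmin_left, Rmax_right in Hx by lra. rewrite !P_on_I by (unfold I11; lra). reflexivity.
Qed.

(* [p 0 = 1], so orthogonality to [p 0] says that [p k] has mean zero. *)
Lemma RInt_P k : (0 < k)%nat -> RInt (P k) (-1) 1 = 0.
Proof.
  intros Hk. destruct p_special as (_ & _ & _ & p0_one & _).
  rewrite <- (RInt_P_mul_P 0 k) by lia. apply RInt_ext. intros x Hx.
  rewrite Rmin_left, Rmax_right in Hx by lra.
  rewrite (P_on_I 0), p0_one by (unfold I11; lra). simpl. ring.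
Qed.

Lemma N_pos k : 0 < N k.
Proof.
  destruct p_special as (_ & p_nonzero & _). destruct (p_nonzero k) as [t0 [It0 Ht0]].
  apply (RInt_pos_of_pos_point _ _ _ t0); [lra | auto with cont | intros; nra | exact It0 |].
  rewrite P_on_I by exact It0. assert (0 < p k t0 * p k t0) by (apply Rsqr_pos_lt, Ht0). lra.
Qed.

Lemma RInt_P_mul_one_plus_P k i : (0 < k)%nat ->
  RInt (fun t => P k t * (1 + P i t)) (-1) 1 = if Nat.eq_dec k i then N i else 0.
Proof.
  intros Hk. rewrite (RInt_ext _ (fun t => P k t + P k t * P i t)) by (intros; simpl; ring).
  rewrite RInt_plus_cont_R, RInt_P by auto with cont.
  destruct Nat.eq_dec as [->|Nki].
  - unfold N. lra.
  - rewrite RInt_P_mul_P by exact Nki. lra.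
Qed.

Definition G i t := RInt (fun s => 1 + P i s) 0 t.

Lemma G_on_I i t : I11 t -> G i t = RInt (fun s => 1 + p i s) 0 t.
Proof.
  intros It. apply RInt_ext. intros x Hx. rewrite P_on_I; [reflexivity|].
  unfold I11, Rmin, Rmax in *. destruct Rle_dec; lra.
Qed.

Lemma is_derive_G i x : is_derive (G i) x (1 + P i x).
Proof. apply (is_derive_RInt_cont_R (fun s => 1 + P i s)). auto with cont. Qed.

Lemma cont_R_G i : cont_R (G i).
Proof. unfold G. auto with cont. Qed.

#[local] Hint Resolve cont_R_G : cont.

Lemma G_odd i t : G i (- t) = - G i t.
Proof. apply RInt_0_opp_even; [auto with cont | intros; rewrite P_even; reflexivity]. Qed.

Lemma G_ends i : (0 < i)%nat -> G i (-1) = -1 /\ G i 1 = 1.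
Proof.
  intros Hi. assert (Hm : G i (-1) = - G i 1) by (rewrite <- G_odd; f_equal; lra).
  assert (E : RInt (fun s => 1 + P i s) (-1) 1 = G i 1 - G i (-1)).
  { apply RInt_derive_interior; [lra | intros; apply cont_R_G | intros; apply is_derive_G | auto with cont]. }
  rewrite RInt_plus_cont_R, RInt_P, RInt_const in E by auto with cont.
  unfold scal in E; simpl in E; unfold mult in E; simpl in E. split; lra.
Qed.

Lemma RInt_G_mul_one_plus_P i j : RInt (fun s => G j s * (1 + P i s)) (-1) 1 = 0.
Proof.
  apply RInt_odd; [auto with cont|]. intros x. rewrite G_odd, P_even. ring.
Qed.

Variable n : nat.
Variable Rel : nat -> nat -> Prop.

Definition coef i k := if excluded_middle_informative (Rel i k) then - / N k else 0.

Lemma coef_mul_N_rel i k : Rel i k -> coef i k * N k = -1.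
Proof.
  intros H. unfold coef. destruct excluded_middle_informative; [|contradiction].
  pose proof (N_pos k). field. lra.
Qed.

Lemma coef_not_rel i k : ~ Rel i k -> coef i k = 0.
Proof. intros H. unfold coef. destruct excluded_middle_informative; [contradiction | reflexivity]. Qed.

Lemma Rabs_coef_le i k : Rabs (coef i k) <= / N k.
Proof.
  pose proof (Rinv_0_lt_compat _ (N_pos k)). unfold coef. destruct excluded_middle_informative.
  - rewrite Rabs_Ropp, Rabs_right; lra.
  - rewrite Rabs_R0. lra.
Qed.

Definition Q i t := sum1 n (fun k => coef i k * P k t).
Definition Qd i t := sum1 n (fun k => coef i k * D k t).

Lemma cont_R_Q i : cont_R (Q i).
Proof. apply (cont_R_sum1 n (fun k t => coef i k * P k t)). auto with cont. Qed.

Lemma cont_R_Qd i : cont_R (Qd i).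
Proof. apply (cont_R_sum1 n (fun k t => coef i k * D k t)). auto with cont. Qed.

#[local] Hint Resolve cont_R_Q cont_R_Qd : cont.

Lemma Q_ends i : Q i (-1) = 0 /\ Q i 1 = 0.
Proof.
  split; apply sum1_zero; intros k Hk; destruct (P_ends k ltac:(lia)) as [E1 E2];
    [rewrite E1 | rewrite E2]; ring.
Qed.

Lemma deriv_I_Q i x : I11 x -> deriv_I (Q i) x (Qd i x).
Proof.
  intros Ix. apply (deriv_I_sum1 n (fun k t => coef i k * P k t) (fun k => coef i k * D k x)).
  intros k _. apply deriv_I_scal, deriv_I_P, Ix.
Qed.

Lemma Q_bounded : exists B, forall i t, Rabs (Q i t) <= B.
Proof.
  exists (sum1 n (fun k => / N k * (1 / 2))). intros i t. apply sum1_abs_le. intros k Hk.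
  rewrite Rabs_mult. apply Rmult_le_compat; try apply Rabs_pos.
  - apply Rabs_coef_le.
  - apply Rabs_P_le. lia.
Qed.

Lemma Qd_bounded : exists B, forall i t, Rabs (Qd i t) <= B.
Proof.
  set (S t := sum1 n (fun k => / N k * Rabs (D k t))).
  assert (S_cont : cont_R S).
  { apply (cont_R_sum1 n (fun k t => / N k * Rabs (D k t))). intros k.
    apply cont_R_mult; [auto with cont|]. intros x. apply continuous_Rabs_comp, cont_R_D. }
  destruct (cont_R_clamp_bounded S S_cont) as [B HB]. exists B. intros i t.
  assert (HS : S (clamp t) = S t) by (unfold S, D; apply sum1_ext; intros; rewrite clamp_idem; reflexivity).
  eapply Rle_trans; [|specialize (HB t); rewrite HS in HB; eapply Rle_trans; [apply Rle_abs | exact HB]].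
  apply sum1_abs_le. intros k _. rewrite Rabs_mult.
  apply Rmult_le_compat_r; [apply Rabs_pos | apply Rabs_coef_le].
Qed.

Lemma RInt_Q_mul_one_plus_P i j : in_n n i ->
  RInt (fun s => Q j s * (1 + P i s)) (-1) 1 = coef j i * N i.
Proof.
  intros Hi. unfold Q.
  rewrite (RInt_ext _ (fun s => sum1 n (fun k => coef j k * (P k s * (1 + P i s))))).
  2:{ intros x _. rewrite sum1_mult_r. apply sum1_ext. intros; ring. }
  rewrite (RInt_sum1 n (fun k s => coef j k * (P k s * (1 + P i s)))) by auto with cont.
  rewrite (sum1_single n _ i Hi).
  - rewrite RInt_scal_cont_R, RInt_P_mul_one_plus_P by (auto with cont; unfold in_n in Hi; lia).
    destruct Nat.eq_dec; [reflexivity | contradiction].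
  - intros k Hk Nki. rewrite RInt_scal_cont_R, RInt_P_mul_one_plus_P by (auto with cont; lia).
    destruct Nat.eq_dec; [contradiction | ring].
Qed.

Lemma RInt_G_mul_Qd i j : (0 < j)%nat ->
  RInt (fun s => G j s * Qd i s) (-1) 1 = - RInt (fun s => Q i s * (1 + P j s)) (-1) 1.
Proof.
  intros Hj.
  assert (E := RInt_product_rule (G j) (Q i) (fun s => 1 + P j s) (Qd i) (-1) 1).
  rewrite RInt_plus_cont_R in E by auto with cont.
  rewrite (proj1 (Q_ends i)), (proj2 (Q_ends i)) in E.
  rewrite (RInt_ext (fun s => (1 + P j s) * Q i s) (fun s => Q i s * (1 + P j s))) in E
    by (intros; simpl; ring).
  enough (RInt (fun s => Q i s * (1 + P j s)) (-1) 1 + RInt (fun s => G j s * Qd i s) (-1) 1 = 0)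
    by lra.
  rewrite E; [ring | lra | auto with cont.. | intros; apply is_derive_G |].
  intros x Hx. apply deriv_I_is_derive, deriv_I_Q; [exact Hx | unfold I11; lra].
Qed.

Section Perturbation.

Variables delta BQ BD : R.
Hypothesis Q_le : forall i t, Rabs (Q i t) <= BQ.
Hypothesis Qd_le : forall i t, Rabs (Qd i t) <= BD.
Hypothesis delta_pos : 0 < delta.
Hypothesis delta_BD : delta * BD < 1 / 6.
Hypothesis delta_BQ_BD : delta * (2 * BQ * BD) < 1.

Definition f i t := G i t + delta * Q i t.
Definition fd i t := 1 + P i t + delta * Qd i t.

Lemma cont_R_f i : cont_R (f i).
Proof. unfold f. auto with cont. Qed.

Lemma cont_R_fd i : cont_R (fd i).
Proof. unfold fd. auto with cont. Qed.

#[local] Hint Resolve cont_R_f cont_R_fd : cont.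

Lemma deriv_I_f i x : I11 x -> deriv_I (f i) x (fd i x).
Proof.
  intros Ix. apply deriv_I_plus; [apply is_derive_deriv_I, is_derive_G | apply deriv_I_scal, deriv_I_Q, Ix].
Qed.

Lemma is_derive_f i x : -1 < x < 1 -> is_derive (f i) x (fd i x).
Proof. intros Hx. apply deriv_I_is_derive, deriv_I_f; [exact Hx | unfold I11; lra]. Qed.

Lemma fd_bounds i t : (0 < i)%nat -> 1 / 3 < fd i t < 3.
Proof.
  intros Hi. unfold fd. assert (HP := Rabs_P_le i t Hi). specialize (Qd_le i t).
  assert (Rabs (delta * Qd i t) < 1 / 6).
  { rewrite Rabs_mult, Rabs_right by lra.
    apply Rle_lt_trans with (delta * BD); [apply Rmult_le_compat_l; lra | exact delta_BD]. }
  apply Rabs_def2 in H. apply Rabs_le_between in HP. lra.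
Qed.

Lemma Rabs_f_sub_G_le i t : Rabs (f i t - G i t) <= delta * BQ.
Proof.
  unfold f. replace (G i t + delta * Q i t - G i t) with (delta * Q i t) by ring.
  rewrite Rabs_mult, Rabs_right by lra. apply Rmult_le_compat_l; [lra | apply Q_le].
Qed.

Lemma f_ends i : (0 < i)%nat -> f i (-1) = -1 /\ f i 1 = 1.
Proof.
  intros Hi. unfold f. destruct (G_ends i Hi) as [-> ->]. destruct (Q_ends i) as [-> ->].
  split; ring.
Qed.

Lemma f_incr i x y : (0 < i)%nat -> I11 x -> I11 y -> x < y -> f i x < f i y.
Proof.
  intros Hi Ix Iy Hxy. destruct (MVT_gen (f i) x y (fd i)) as [c [_ E]].
  - intros z Hz. rewrite Rmin_left, Rmax_right in Hz by lra. apply is_derive_f. unfold I11 in *; lra.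
  - intros z _. apply continuity_pt_filterlim, cont_R_f.
  - assert (Hc := fd_bounds i c Hi). nra.
Qed.

Lemma f_in_G i : (0 < i)%nat -> in_G (f i).
Proof.
  intros Hi. destruct (f_ends i Hi) as [Em1 Ep1].
  refine (conj _ (conj _ (conj _ (conj Em1 Ep1)))).
  - intros x Ix. split.
    + destruct (Req_dec x (-1)) as [->|Nx]; [lra|].
      assert (f i (-1) < f i x) by (apply f_incr; unfold I11 in *; auto; lra). lra.
    + destruct (Req_dec x 1) as [->|Nx]; [lra|].
      assert (f i x < f i 1) by (apply f_incr; unfold I11 in *; auto; lra). lra.
  - intros x y. apply f_incr, Hi.
  - intros x _. apply cont_R_cont_I, cont_R_f.
Qed.

Lemma RInt_f i : RInt (f i) (-1) 1 = 0.
Proof.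
  unfold f. rewrite RInt_plus_cont_R, RInt_scal_cont_R by auto with cont.
  rewrite RInt_odd by (auto with cont || apply G_odd).
  rewrite (RInt_sum1 n (fun k t => coef i k * P k t)) by auto with cont.
  rewrite sum1_zero; [lra|]. intros k Hk.
  rewrite RInt_scal_cont_R, RInt_P by (auto with cont; lia). ring.
Qed.

Lemma RInt_f_mul_fd i j : in_n n i -> in_n n j ->
  RInt (fun s => f j s * fd i s) (-1) 1 =
  delta * (coef j i * N i - coef i j * N j) + delta * delta * RInt (fun s => Q j s * Qd i s) (-1) 1.
Proof.
  intros Hi Hj.
  rewrite (RInt_ext _ (fun s => (G j s * (1 + P i s) + delta * (Q j s * (1 + P i s)))
                                  + (delta * (G j s * Qd i s) + delta * delta * (Q j s * Qd i s)))).
  2:{ intros x _. unfold f, fd. simpl. ring. }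
  rewrite !RInt_plus_cont_R, !RInt_scal_cont_R by auto with cont.
  rewrite RInt_G_mul_one_plus_P, RInt_G_mul_Qd, !RInt_Q_mul_one_plus_P by (unfold in_n in *; auto; lia).
  lra.
Qed.

Hypothesis Rel_tournament : tournament n Rel.

Lemma RInt_f_mul_fd_pos_iff i j : in_n n i -> in_n n j -> i <> j ->
  (0 < RInt (fun s => f j s * fd i s) (-1) 1 <-> Rel i j).
Proof.
  intros Hi Hj Nij. rewrite RInt_f_mul_fd by assumption.
  set (T := RInt (fun s => Q j s * Qd i s) (-1) 1).
  assert (HT : Rabs T <= 2 * (BQ * BD)).
  { replace 2 with (1 - -1) by ring. apply abs_RInt_le_const; [lra | auto with cont |].
    intros t _. rewrite Rabs_mult. apply Rmult_le_compat; try apply Rabs_pos; auto. }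
  assert (Hsmall : Rabs (delta * delta * T) < delta).
  { rewrite !Rabs_mult, Rabs_right by lra. pose proof (Rabs_pos T).
    assert (delta * Rabs T < 1) by nra. nra. }
  apply Rabs_def2 in Hsmall.
  destruct Rel_tournament as (_ & _ & Htotal).
  destruct (Htotal i j Hi Hj Nij) as [[Hij|Hji] Hasym].
  - rewrite (coef_mul_N_rel i j), (coef_not_rel j i) by tauto. split; [tauto | intros _; lra].
  - rewrite (coef_mul_N_rel j i), (coef_not_rel i j) by tauto. split; [intros; lra | tauto].
Qed.

Lemma f_comp_inv_Gplus_iff i j : in_n n i -> in_n n j -> i <> j ->
  (in_Gplus (fun t => f j (inv_I (f i) t)) <-> Rel i j).
Proof.
  intros Hi Hj Nij. unfold in_n in *.
  assert (fi_G : in_G (f i)) by (apply f_in_G; lia).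
  rewrite <- RInt_f_mul_fd_pos_iff, <- (RInt_comp_inv_I (f i) fi_G (f j) (fd i))
    by (auto with cont || (unfold in_n; lia) || (intros; apply is_derive_f; assumption)).
  unfold in_Gplus. split; [tauto|]. intros Hpos. split; [|exact Hpos].
  apply in_G_comp_inv_I; [exact fi_G | apply f_in_G; lia].
Qed.

End Perturbation.

End Construction.

Lemma small_delta_exists BQ BD eps : 0 <= BQ -> 0 <= BD -> 0 < eps ->
  exists delta, 0 < delta /\ delta * BD < 1 / 6 /\ delta * (2 * BQ * BD) < 1 /\ delta * BQ < eps.
Proof.
  intros HQ HD Heps. set (K := 1 + 6 * BD + 2 * BQ * BD + BQ / eps).
  assert (HK : 0 <= BQ / eps) by (apply Rdiv_le_0_compat; lra).
  assert (HBB : 0 <= 2 * BQ * BD) by nra.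
  exists (/ K). assert (Kpos : 0 < K) by (unfold K; lra).
  assert (Hinv : 0 < / K) by (apply Rinv_0_lt_compat, Kpos).
  assert (Hsmall : forall X, 0 <= X -> X < K -> / K * X < 1).
  { intros X HX HXK. apply (Rmult_lt_reg_l K); [exact Kpos|]. field_simplify; lra. }
  repeat split.
  - exact Hinv.
  - assert (/ K * (6 * BD) < 1) by (apply Hsmall; unfold K; lra). lra.
  - apply Hsmall; unfold K; lra.
  - assert (H : / K * (BQ / eps) < 1) by (apply Hsmall; unfold K; lra).
    replace (/ K * BQ) with (/ K * (BQ / eps) * eps) by (field; lra).
    nra.
Qed.

Theorem theorem7p2 (p : nat -> R -> R) (n : nat) (Rel : nat -> nat -> Prop) (eps : R) :
  special_seq p -> tournament n Rel -> 0 < eps ->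
  let g := fun (i : nat) (t : R) => RInt (fun s => 1 + p i s) 0 t in
  exists f : nat -> R -> R,
    (forall i, in_n n i -> in_G0 (f i)) /\
    (forall i, in_n n i ->
       exists M, M < eps /\ forall t, I11 t -> Rabs (f i t - g i t) <= M) /\
    (forall i, in_n n i -> forall t, I11 t ->
       exists l, deriv_I (f i) t l /\ 1/3 < l < 3) /\
    (forall i j, in_n n i -> in_n n j -> i <> j ->
       (in_Gplus (fun t => f j (inv_I (f i) t)) <-> Rel i j)).
Proof.
  intros p_special Rel_tournament Heps g.
  destruct (Q_bounded p p_special n Rel) as [BQ Q_le].
  destruct (Qd_bounded p p_special n Rel) as [BD Qd_le].
  assert (BQ_nn : 0 <= BQ) by exact (Rle_trans _ _ _ (Rabs_pos _) (Q_le 0%nat 0)).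
  assert (BD_nn : 0 <= BD) by exact (Rle_trans _ _ _ (Rabs_pos _) (Qd_le 0%nat 0)).
  destruct (small_delta_exists BQ BD eps BQ_nn BD_nn Heps) as (delta & Hpos & HBD & HBQBD & Heps').
  exists (f p n Rel delta). split; [|split; [|split]].
  - intros i Hi. split; [eapply f_in_G; eauto; unfold in_n in Hi; lia | apply RInt_f, p_special].
  - intros i Hi. exists (delta * BQ). split; [exact Heps'|]. intros t It.
    unfold g. rewrite <- G_on_I by exact It. eapply Rabs_f_sub_G_le; eauto.
  - intros i Hi t It. exists (fd p p_special n Rel delta i t).
    split; [apply deriv_I_f, It | eapply fd_bounds; eauto; unfold in_n in Hi; lia].
  - intros i j Hi Hj Nij. eapply f_comp_inv_Gplus_iff; eauto.
Qed.
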